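(* A query $Q$ is hierarchical if and only if its multivariate extension $\widehat Q$ is acyclic (i.e., every component $\widehat Q_\sigma$ of $\widehat Q$ is $\alpha$-acyclic).
   Context: A query is a full conjunctive query $Q = R_1(\mathbf X_1)\wedge\cdots\wedge R_k(\mathbf X_k)$. For a variable $X$, $\mathrm{at}(X)$ is the set of atoms whose schema contains $X$. $Q$ is hierarchical if for any two variables $X,Y$, either $\mathrm{at}(X)\subseteq\mathrm{at}(Y)$, or $\mathrm{at}(Y)\subseteq\mathrm{at}(X)$, or $\mathrm{at}(X)\cap\mathrm{at}(Y)=\emptyset$. A query is ($\alpha$-)acyclic if it has a join tree: a tree whose nodes are its atoms such that, for every variable, the atoms containing it form a connected subtree. Multivariate extension: take fresh variables $Z_1,\dots,Z_k$. For a permutation $\sigma$ of $[k]$, the component $\widehat Q_\sigma$ replaces each atom $R_{\sigma_i}(\mathbf X_{\sigma_i})$ by $\widehat R_{\sigma_i}(Z_1,\dots,Z_i,\mathbf X_{\sigma_i})$; $\widehat Q$ is the union of all $k!$ components, and it is called acyclic when each component is. *)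

From mathcomp Require Import all_boot all_order all_fingroup.
Set Implicit Arguments. Unset Strict Implicit. Unset Printing Implicit Defensive.

(* A full conjunctive query with k atoms R_1(X_1) /\ ... /\ R_k(X_k) over a
   finite type V of variables is represented by its atom schemas
   X : 'I_k -> {set V} (atom i has schema X i).  Atoms are identified by
   their index, so repeated relation symbols (self-joins) are allowed; the
   relation symbols play no role in hierarchicity or acyclicity. *)

Definition atoms_of (V : finType) (k : nat) (X : 'I_k -> {set V}) (x : V)
  : {set 'I_k} := [set i | x \in X i].

Definition hierarchical (V : finType) (k : nat) (X : 'I_k -> {set V}) : Prop :=
  forall x y : V,
    [|| atoms_of X x \subset atoms_of X y,
        atoms_of X y \subset atoms_of X x
      | [disjoint atoms_of X x & atoms_of X y]].

(* A (simple, undirected) tree on the finite node set T: a symmetric,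
   irreflexive, connected relation with exactly #|T| - 1 edges
   (each edge counted as two ordered pairs). *)
Definition is_tree (T : finType) (e : rel T) : Prop :=
  symmetric e /\ irreflexive e /\ (forall a b : T, connect e a b) /\
  #|[set p : T * T | e p.1 p.2]| = (#|T| - 1).*2.

Definition restr_rel (T : finType) (e : rel T) (S : {set T}) : rel T :=
  [rel a b | [&& e a b, a \in S & b \in S]].

Definition connected_in (T : finType) (e : rel T) (S : {set T}) : Prop :=
  forall a b, a \in S -> b \in S -> connect (restr_rel e S) a b.

(* alpha-acyclicity: existence of a join tree whose nodes are the atoms *)
Definition acyclic (V : finType) (k : nat) (X : 'I_k -> {set V}) : Prop :=
  exists e : rel 'I_k,
    is_tree e /\ forall x : V, connected_in e (atoms_of X x).

(* Variables of the extension are V + 'I_k, where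
   inr j stands for the fresh variable Z_{j+1}.  In the component Q_sigma,
   the atom at position i (0-based, i.e. position i+1 in the paper) is
   R_{sigma i}(Z_1,...,Z_{i+1}, X_{sigma i}). *)
Definition ext_component (V : finType) (k : nat) (X : 'I_k -> {set V})
  (s : {perm 'I_k}) : 'I_k -> {set (V + 'I_k)%type} :=
  fun i => [set inr z | z : 'I_k & (z <= i)%N] :|: [set inl x | x in X (s i)].

Definition ext_acyclic (V : finType) (k : nat) (X : 'I_k -> {set V}) : Prop :=
  forall s : {perm 'I_k}, acyclic (ext_component X s).

From mathcomp Require Import all_boot all_order all_fingroup.
From mathcomp Require Import zify.
Set Implicit Arguments. Unset Strict Implicit. Unset Printing Implicit Defensive.

(* Hierarchical implies acyclic: in a fixed order of the atoms, attach every
   atom but the last to the later atom sharing the most variables with it.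
   For hierarchical schemas the variables an atom shares with later atoms form
   a chain under inclusion, so this best later neighbour contains all of them;
   and the fresh variables Z_1, ..., Z_i occur in a suffix of the order.  Hence
   every variable occurs in a subtree.
   Conversely, if x occurs in atoms a and c but not b, and y in b and c but not
   a, order a and b last.  Then Z_(k-1) occurs exactly in a and b, forcing the
   edge a - b into any join tree, while x joins c to a avoiding b and y joins
   c to b avoiding a: together they close a cycle.  Trees are detected by
   counting edges: a connected graph on N nodes has at least N - 1 edges. *)

Definition edge_set (T : finType) (e : rel T) : {set T * T} :=
  [set p | e p.1 p.2].

Lemma card_parent_edges (T : finType) (D : {set T}) (p : T -> T)
    (f : T -> nat) :
  {in D, forall a, f (p a) < f a} ->
  #|[set (a, p a) | a in D] :|: [set (p a, a) | a in D]| = #|D|.*2.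
Proof.
move=> p_lt; rewrite cardsU !card_imset => [|a b []|a b []] //.
suff -> : [set (a, p a) | a in D] :&: [set (p a, a) | a in D] = set0.
  by rewrite cards0 subn0 addnn.
apply/setP=> q; rewrite !inE; apply/negP.
case/andP=> /imsetP[a Da ->] /imsetP[b Db [ab pab]].
move: (p_lt a Da) (p_lt b Db); rewrite -ab pab => /ltn_trans lt /lt.
by rewrite ltnn.
Qed.

Section ConnectedEdgeCount.

Variables (T : finType) (e : rel T) (r : T).
Hypothesis r_connect : forall a, connect e r a.

Lemma connect_ranked_parent :
  exists f : T -> nat, forall a, a != r -> exists2 b, e b a & f b < f a.
Proof.
have reach a : exists m, [exists t : m.-tuple T, path e r t && (last r t == a)].
  have /connectP[t t_path ->] := r_connect a.
  by exists (size t); apply/existsP; exists (in_tuple t); rewrite t_path eqxx.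
exists (fun a => ex_minn (reach a)) => a a_r.
case: ex_minnP => m /existsP[[t /= /eqP <-]] /andP[+ /eqP t_a] _.
case/lastP: t t_a => [/= ra|t b]; first by rewrite ra eqxx in a_r.
rewrite last_rcons rcons_path size_rcons => <- /andP[t_path e_ta].
exists (last r t) => //; case: ex_minnP => m' _ /(_ (size t)) min_t.
rewrite ltnS min_t //; apply/existsP; exists (in_tuple t).
by rewrite t_path eqxx.
Qed.

Lemma card_edges_connected : symmetric e -> (#|T| - 1).*2 <= #|edge_set e|.
Proof.
move=> e_sym; have [f parent] := connect_ranked_parent.
pose p a := odflt a [pick b | e b a && (f b < f a)].
have p_spec : {in [set~ r], forall a, e (p a) a && (f (p a) < f a)}.
  move=> a; rewrite !inE => /parent[b eba fba]; rewrite /p.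
  by case: pickP => [//|/(_ b)]; rewrite eba fba.
have p_lt : {in [set~ r], forall a, f (p a) < f a}.
  by move=> a /p_spec /andP[].
rewrite subn1 -(cardsC1 r) -(card_parent_edges p_lt); apply: subset_leq_card.
apply/subsetP=> _ /setUP[]/imsetP[a /p_spec /andP[e_pa _] ->].
  by rewrite inE /= e_sym.
by rewrite inE.
Qed.

End ConnectedEdgeCount.

Lemma restr_rel_sym (T : finType) (e : rel T) (S : {set T}) :
  symmetric e -> symmetric (restr_rel e S).
Proof. by move=> e_sym a b; rewrite /restr_rel /= e_sym (andbC (a \in S)). Qed.

Definition del_edge (T : finType) (e : rel T) (u v : T) : rel T :=
  [rel a b | e a b && ((a, b) \notin [set (u, v); (v, u)])].

Section DeleteEdge.

Variables (T : finType) (e : rel T) (u v : T).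

Lemma del_edge_sym : symmetric e -> symmetric (del_edge e u v).
Proof.
move=> e_sym a b; rewrite /del_edge /= e_sym !inE !xpair_eqE.
by rewrite orbC (andbC (b == u)) (andbC (b == v)).
Qed.

Lemma connect_restr_del_edge (S : {set T}) a b :
  (u \notin S) || (v \notin S) ->
  connect (restr_rel e S) a b -> connect (del_edge e u v) a b.
Proof.
move=> uvS; apply: connect_sub => c d /and3P[e_cd cS dS]; apply: connect1.
rewrite /del_edge /= e_cd !inE !xpair_eqE.
by apply: contraL uvS => /orP[]/andP[/eqP<- /eqP<-]; rewrite cS dS.
Qed.

Lemma tree_del_edge_disconnected :
  is_tree e -> e u v -> ~~ connect (del_edge e u v) u v.
Proof.
move=> [e_sym [e_irr [e_conn e_card]]] e_uv; apply/negP => uv_conn.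
rewrite -/(edge_set e) in e_card.
have uv : u != v by apply: contraTneq e_uv => ->; rewrite e_irr.
have u_conn a : connect (del_edge e u v) u a.
  apply: connect_sub (e_conn u a) => b c e_bc.
  have [|uv_bc] := boolP ((b, c) \in [set (u, v); (v, u)]); last first.
    by apply: connect1; rewrite /del_edge /= e_bc.
  rewrite !inE !xpair_eqE => /orP[]/andP[/eqP-> /eqP->] //.
  by rewrite sym_connect_sym //; apply: del_edge_sym.
have uv_edges : [set (u, v); (v, u)] \subset edge_set e.
  by apply/subsetP => _ /set2P[]->; rewrite inE // e_sym.
have := card_edges_connected u_conn (del_edge_sym e_sym).
have -> : edge_set (del_edge e u v) = edge_set e :\: [set (u, v); (v, u)].
  by apply/setP => -[a b]; rewrite !inE /del_edge /= !inE andbC.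
rewrite cardsD (setIidPr uv_edges) cards2 xpair_eqE (negPf uv) e_card.
move: (subset_leq_card uv_edges); rewrite cards2 xpair_eqE (negPf uv) e_card.
lia.
Qed.

End DeleteEdge.

Lemma connect_restr_pair (T : finType) (e : rel T) (u v : T) :
  irreflexive e -> u != v -> connect (restr_rel e [set u; v]) u v -> e u v.
Proof.
move=> e_irr uv /connectP[[|w p] /=] => [_ vu|]; first by rewrite vu eqxx in uv.
case/andP=> /and3P[e_uw _]; rewrite !inE => /orP[/eqP wu|/eqP <-] //.
by rewrite wu e_irr in e_uw.
Qed.

Lemma perm_of_pairs (T : finType) (u v a b : T) :
  u != v -> a != b -> exists s : {perm T}, s u = a /\ s v = b.
Proof.
move=> uv ab; pose w := tperm u a v.
have aw : a != w by rewrite -[a](tpermL u) (inj_eq perm_inj).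
exists (tperm u a * tperm w b)%g; rewrite !permM tpermL -/w tpermL.
by split; rewrite // tpermD // eq_sym.
Qed.

Lemma neq_ord_max n (i : 'I_n.+1) : (i != ord_max) = (i < n).
Proof. by rewrite -val_eqE /= ltn_neqAle -ltnS ltn_ord andbT. Qed.

Lemma ltn_neq_ord_max n (i j : 'I_n.+1) : i < j -> i != ord_max.
Proof. by rewrite neq_ord_max => /leq_trans; apply; rewrite -ltnS. Qed.

Section ParentTree.

Variables (n : nat) (q : 'I_n.+1 -> 'I_n.+1).
Hypothesis q_gt : forall i, i != ord_max -> i < q i.

Definition parent_tree : rel 'I_n.+1 :=
  [rel a b : 'I_n.+1 | (a < b) && (b == q a) || (b < a) && (a == q b)].

Lemma parent_tree_sym : symmetric parent_tree.
Proof. by move=> a b; rewrite /parent_tree /= orbC. Qed.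

Lemma parent_tree_connected_in (S : {set 'I_n.+1}) :
  {in S &, forall c p : 'I_n.+1, c < p -> q c \in S} ->
  connected_in parent_tree S.
Proof.
move=> S_closed a b aS bS.
have [m mS m_max] := arg_maxnP (@nat_of_ord _) aS.
suff to_m c : c \in S -> connect (restr_rel parent_tree S) c m.
  apply: connect_trans (to_m a aS) _.
  by rewrite sym_connect_sym ?to_m //; apply/restr_rel_sym/parent_tree_sym.
have [d] := ubnP (m - c); elim: d c => // d IH c lt_d cS.
have [-> //|cm] := eqVneq c m.
have lt_cm : c < m by move: cm (m_max c cS); rewrite -val_eqE /=; lia.
have lt_cq : c < q c by apply/q_gt/(ltn_neq_ord_max lt_cm).
have qS := S_closed c m cS mS lt_cm.
apply: connect_trans (connect1 _) (IH (q c) _ qS).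
  by rewrite /restr_rel /parent_tree /= lt_cq eqxx cS qS.
lia.
Qed.

Lemma parent_tree_is_tree : is_tree parent_tree.
Proof.
split; first exact: parent_tree_sym.
split; first by move=> a; rewrite /parent_tree /= ltnn.
split.
  move=> a b; apply: connect_sub
    (parent_tree_connected_in _ (in_setT a) (in_setT b)) => //.
  by move=> c d /andP[e_cd _]; apply: connect1.
pose D := [set~ @ord_max n].
have q_lt : {in D, forall a, n - q a < n - a}.
  by move=> a; rewrite !inE => /q_gt; have := ltn_ord (q a); lia.
have -> : #|'I_n.+1| - 1 = #|D| by rewrite cardsC1 card_ord subn1.
rewrite -(card_parent_edges q_lt).
have lt_max (a b : 'I_n.+1) : a < b -> a \in D.
  by rewrite !inE => /ltn_neq_ord_max.
have up (a b : 'I_n.+1) :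
    ((a, b) \in [set (c, q c) | c in D]) = (a < b) && (b == q a).
  apply/imsetP/andP => [[c cD [-> ->]]|[lt_ab /eqP ->]].
    by rewrite eqxx q_gt // -in_setC1.
  by exists a => //; apply: lt_max lt_ab.
have down (a b : 'I_n.+1) :
    ((a, b) \in [set (q c, c) | c in D]) = (b < a) && (a == q b).
  apply/imsetP/andP => [[c cD [-> ->]]|[lt_ba /eqP ->]].
    by rewrite eqxx q_gt // -in_setC1.
  by exists b => //; apply: lt_max lt_ba.
by apply: eq_card => -[a b]; rewrite !inE up down.
Qed.

End ParentTree.

Section BestParent.

Variables (V : finType) (n : nat) (Y : 'I_n.+1 -> {set V}).

(* The successor ranks every later atom, even a disjoint one, above all the
   earlier atoms, which score 0. *)
Definition overlap_score (i p : 'I_n.+1) : nat :=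
  if i < p then #|Y p :&: Y i|.+1 else 0.

Definition best_parent (i : 'I_n.+1) : 'I_n.+1 :=
  [arg max_(p > ord_max) overlap_score i p].

Lemma best_parent_gt i : i != ord_max -> i < best_parent i.
Proof.
move=> i_max; rewrite /best_parent; case: arg_maxnP => // p _ /(_ ord_max isT).
have lt_in : i < @ord_max n by rewrite -neq_ord_max.
by rewrite /overlap_score lt_in; case: ifP.
Qed.

Lemma best_parent_max (i p : 'I_n.+1) :
  i < p -> #|Y p :&: Y i| <= #|Y (best_parent i) :&: Y i|.
Proof.
move=> lt_ip; rewrite /best_parent; case: arg_maxnP => // m _ /(_ p isT).
by rewrite /overlap_score lt_ip; case: ifP.
Qed.

End BestParent.

Section MultivariateExtension.

Variables (V : finType) (k : nat) (X : 'I_k -> {set V}).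

Lemma atoms_ext_inl (s : {perm 'I_k}) x :
  atoms_of (ext_component X s) (inl x) = [set i | x \in X (s i)].
Proof.
apply/setP=> i; rewrite !inE (mem_imset _ _ inl_inj).
by case: imsetP => // -[].
Qed.

Lemma atoms_ext_inr (s : {perm 'I_k}) z :
  atoms_of (ext_component X s) (inr z) = [set i : 'I_k | z <= i].
Proof.
apply/setP=> i; rewrite !inE (mem_imset _ _ inr_inj) inE.
by case: imsetP => [[? _ //]|_]; rewrite orbF.
Qed.

Lemma hierarchical_proper_meet (i j l : 'I_k) x :
  hierarchical X -> x \in X i -> x \in X j -> x \notin X l ->
  X l :&: X i \proper X j :&: X i.
Proof.
move=> hier xi xj xl; apply/properP; split; last first.
  by exists x; rewrite !inE ?xi ?xj // (negPf xl).
apply/subsetP => y; rewrite !inE => /andP[yl yi]; rewrite yi andbT.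
case/or3P: (hier x y) => [/subsetP xy|/subsetP yx|xy_disj].
- by have := xy j; rewrite !inE xj => ->.
- by have := yx l; rewrite !inE yl (negPf xl) => /(_ isT).
- by have /pred0P/(_ i) := xy_disj; rewrite /= !inE xi yi.
Qed.

Lemma ext_cyclic_of_non_hierarchical (a b c : 'I_k) x y :
  x \in X a -> x \notin X b -> y \in X b -> y \notin X a ->
  x \in X c -> y \in X c -> ~ ext_acyclic X.
Proof.
move=> xa xb yb ya xc yc acyc.
have ab : a != b by apply: contraNneq xb => <-.
have k_gt1 : 1 < k.
  by move: ab; rewrite -val_eqE /=; have := ltn_ord a; have := ltn_ord b; lia.
have u_lt : k - 2 < k by lia.
have v_lt : k - 1 < k by lia.
pose u := Ordinal u_lt; pose v := Ordinal v_lt.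
have uv : u != v by rewrite -val_eqE /=; lia.
have [s [su sv]] := perm_of_pairs uv ab.
have [e [e_tree e_conn]] := acyc s.
have e_uv : e u v.
  apply: connect_restr_pair (proj1 (proj2 e_tree)) uv _.
  have -> : [set u; v] = atoms_of (ext_component X s) (inr u).
    apply/setP => i; rewrite atoms_ext_inr !inE -!val_eqE /=.
    by have := ltn_ord i; lia.
  by apply: e_conn; rewrite atoms_ext_inr inE /=; lia.
have c_u : connect (del_edge e u v) (s^-1 c)%g u.
  apply: (connect_restr_del_edge (S := atoms_of (ext_component X s) (inl x))).
    by rewrite atoms_ext_inl !inE sv xb orbT.
  by apply: e_conn; rewrite atoms_ext_inl inE ?permKV ?su.
have c_v : connect (del_edge e u v) (s^-1 c)%g v.
  apply: (connect_restr_del_edge (S := atoms_of (ext_component X s) (inl y))).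
    by rewrite atoms_ext_inl !inE su ya.
  by apply: e_conn; rewrite atoms_ext_inl inE ?permKV ?sv.
move/negP: (tree_del_edge_disconnected e_tree e_uv); apply.
apply: connect_trans c_v; rewrite sym_connect_sym //.
exact/del_edge_sym/(proj1 e_tree).
Qed.

Lemma ext_acyclic_hierarchical : ext_acyclic X -> hierarchical X.
Proof.
move=> acyc x y; apply/negPn/negP; rewrite !negb_or disjoint_subset.
case/and3P=> /subsetPn[a xa ya] /subsetPn[b yb xb] /subsetPn[c xc yc].
move: xa ya yb xb xc yc; rewrite !inE negbK => xa ya yb xb xc yc.
exact: ext_cyclic_of_non_hierarchical xa xb yb ya xc yc acyc.
Qed.

End MultivariateExtension.

Lemma hierarchical_ext_acyclic (V : finType) (k : nat) (X : 'I_k -> {set V}) :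
  hierarchical X -> ext_acyclic X.
Proof.
move=> hier s; case: k X s hier => [|n] X s hier.
  exists [rel _ _ | false]; split=> [|x []//]; split=> [//|]; split=> [//|].
  by split=> [[] //|]; rewrite card_ord; apply: eq_card0 => p; rewrite !inE.
pose q := best_parent (fun i => X (s i)).
exists (parent_tree q); split; first exact/parent_tree_is_tree/best_parent_gt.
have lt_q (c p : 'I_n.+1) : c < p -> c < q c.
  by move/ltn_neq_ord_max; apply: best_parent_gt.
case=> [x|z].
- rewrite atoms_ext_inl; apply: (parent_tree_connected_in (best_parent_gt _)).
  move=> c p; rewrite !inE => xc xp lt_cp; apply/negPn/negP => xq.
  have := proper_card (hierarchical_proper_meet hier xc xp xq).
  by rewrite ltnNge (best_parent_max (fun i => X (s i)) lt_cp).
- rewrite atoms_ext_inr; apply: (parent_tree_connected_in (best_parent_gt _)).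
  move=> c p; rewrite !inE => zc _ /lt_q lt_cq.
  exact: leq_trans zc (ltnW lt_cq).
Qed.

Theorem mainTheorem7 (V : finType) (k : nat) (X : 'I_k -> {set V}) :
  hierarchical X <-> ext_acyclic X.
Proof.
by split; [apply: hierarchical_ext_acyclic | apply: ext_acyclic_hierarchical].
Qed.
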